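(* Under the setup in the context, $$\sup_{t\in\mathbb{R}}\big|\mathbb{P}(\|T_n\|_\infty\le t)-\mathbb{P}(\|T_n^Y\|_\infty\le t)\big|\le n\,\mathbb{P}\Big(\max_{1\le j\le d}\frac{(e_j^\top X_1)^2}{a_j^2}>n\Big).$$
   Context: Let $n\ge1$, $d\ge1$, and let $X_1,\dots,X_n$ be IID integrable random vectors in $\mathbb{R}^d$ with $\mathbb{E}X_1=0$ and $\mathbb{P}(e_j^\top X_1\neq0)>0$ for every $j$, where $e_j$ is the $j$-th canonical basis vector; $\|\cdot\|_\infty$ is the max-norm. For each $j$ define $a_j\ge0$ by $a_j^2:=\sup\{b\ge0:\mathbb{E}[(e_j^\top X_1)^2\mathbf{1}\{(e_j^\top X_1)^2\le bn\}]\ge b\}$, and $e_j^\top Y_i := \frac{e_j^\top X_i}{a_j n^{1/2}}\mathbf{1}\{(e_j^\top X_i)^2\le a_j^2 n\}$. Define $e_j^\top T_n := |\sum_{i=1}^n e_j^\top X_i|/\sqrt{\sum_{i=1}^n (e_j^\top X_i)^2}$ and $e_j^\top T_n^Y := |\sum_{i=1}^n e_j^\top Y_i|/\sqrt{\sum_{i=1}^n (e_j^\top Y_i)^2}$ (with the same fixed convention for $0/0$ in both). *)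

From HB Require Import structures.
From mathcomp Require Import all_boot all_order all_algebra.
From mathcomp Require Import all_classical all_reals all_analysis.
Set Implicit Arguments. Unset Strict Implicit. Unset Printing Implicit Defensive.
Import Order.TTheory GRing.Theory Num.Theory.
Import numFieldNormedType.Exports.
Local Open Scope classical_set_scope.
Local Open Scope ring_scope.

Section Defs.
Context {dO : measure_display} {Omega : measurableType dO} {R : realType}.

(* The i-th random vector X_i : Omega -> R^d, with R^d modelled as 'I_d -> R.
   X i j = e_j^T X_i. *)
Definition rvec (d : nat) (X : nat -> 'I_d -> Omega -> R) (i : nat) :
  Omega -> ('I_d -> R) := fun w j => X i j w.

Definition coord_cylinders (d : nat) : set (set ('I_d -> R)) :=
  [set C | exists (j : 'I_d) (B : set R), measurable B /\
           C = (fun x : 'I_d -> R => x j) @^-1` B].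

Definition borel_Rd (d : nat) (C : set ('I_d -> R)) : Prop :=
  <<s @coord_cylinders d >> C.

Definition sigma_of (d : nat) (X : nat -> 'I_d -> Omega -> R) (i : nat)
  (A : set Omega) : Prop :=
  exists C, borel_Rd C /\ A = rvec X i @^-1` C.

(* X_0, ..., X_{n-1} (the paper's X_1..X_n) are IID. *)
Definition iid_vectors (P : probability Omega R) (n d : nat)
  (X : nat -> 'I_d -> Omega -> R) : Prop :=
  (forall A : nat -> set Omega, (forall i, (i < n)%N -> sigma_of X i (A i)) ->
     P (\bigcap_(i in [set k | (k < n)%N]) A i) = (\prod_(i < n) P (A i))%E)
  /\
  (forall i, (i < n)%N -> forall C, borel_Rd C ->
     P (rvec X i @^-1` C) = P (rvec X 0 @^-1` C)).

Definition a_sq (P : probability Omega R) (n d : nat)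
  (X : nat -> 'I_d -> Omega -> R) (j : 'I_d) : R :=
  sup [set b : R | 0 <= b /\
     (b%:E <= \int[P]_w ((X 0 j w ^+ 2 * (if X 0 j w ^+ 2 <= b * n%:R then 1 else 0))%:E))%E].

Definition a_coef (P : probability Omega R) (n d : nat)
  (X : nat -> 'I_d -> Omega -> R) (j : 'I_d) : R :=
  Num.sqrt (a_sq P n X j).

Definition Ytrunc (P : probability Omega R) (n d : nat)
  (X : nat -> 'I_d -> Omega -> R) (i : nat) (j : 'I_d) (w : Omega) : R :=
  X i j w / (a_coef P n X j * Num.sqrt n%:R) *
  (if X i j w ^+ 2 <= a_coef P n X j ^+ 2 * n%:R then 1 else 0).

Definition ratio (c num den : R) : R := if den == 0 then c else num / den.

Definition selfnorm (c : R) (n d : nat) (Z : nat -> 'I_d -> Omega -> R)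
  (j : 'I_d) (w : Omega) : R :=
  ratio c `|\sum_(i < n) Z i j w| (Num.sqrt (\sum_(i < n) Z i j w ^+ 2)).

Definition maxnorm (d : nat) (v : 'I_d -> R) : R := \big[Num.max/0]_(j < d) `|v j|.

End Defs.

From Pilot Require Import Defs.
From HB Require Import structures.
From mathcomp Require Import all_boot all_order all_algebra.
From mathcomp Require Import all_classical all_reals all_analysis.
From mathcomp Require Import measurable_realfun lra.
Set Implicit Arguments. Unset Strict Implicit. Unset Printing Implicit Defensive.
Import Order.TTheory GRing.Theory Num.Theory.
Import numFieldNormedType.Exports.
Local Open Scope classical_set_scope.
Local Open Scope ring_scope.

(* Call an observation an outlier in coordinate j when it is discarded by the
   truncation defining Y.  On the event that no X_i, i < n, has an outlier
   coordinate, every e_j^T Y_i equals k_j e_j^T X_i for one constant k_j > 0,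
   and a self-normalized sum is invariant under such a rescaling; hence
   T_n^Y = T_n there.  The events {||T_n||_oo <= t} and {||T_n^Y||_oo <= t}
   therefore differ only on the union of the n events "X_i has an outlier
   coordinate", whose probability is at most n P(X_1 has an outlier
   coordinate) by the union bound and identical distribution. *)

Section measurable_real_functions.
Context {R : realType}.

Lemma measurable_inv : measurable_fun [set: R] (@GRing.inv R).
Proof.
have -> : @GRing.inv R = (fun x => if x == 0 then 0 else x^-1).
  by apply/funext => x; case: eqP => // ->; rewrite invr0.
apply: measurable_fun_if => //; first exact: measurable_fun_eqr.
have -> : [set: R] `&` (fun x => x == 0) @^-1` [set false] = ~` [set 0].
  by apply/seteqP; split => x /=; [case=> _ /eqP|move=> /eqP/negbTE ->].
apply: open_continuous_measurable_fun.
  exact/closed_openC/accessible_closed_set1/hausdorff_accessible/Rhausdorff.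
by move=> x; rewrite inE => /eqP x0; exact: inv_continuous.
Qed.

Lemma measurable_sqrt : measurable_fun [set: R] (@Num.sqrt R).
Proof. apply: continuous_measurable_fun; exact: sqrt_continuous. Qed.

End measurable_real_functions.

Section measurable_functions.
Context {d : measure_display} {T : measurableType d} {R : realType}.
Implicit Types f g : T -> R.

Lemma measurable_ratio (c : R) f g :
  measurable_fun setT f -> measurable_fun setT g ->
  measurable_fun setT (fun w => Defs.ratio c (f w) (g w)).
Proof.
move=> mf mg; apply: measurable_fun_ifT.
- exact: measurable_fun_eqr.
- exact: measurable_cst.
- exact/measurable_funM/(measurableT_comp measurable_inv).
Qed.

Lemma measurable_bigmaxr (I : Type) (s : seq I) (F : I -> T -> R) :
  (forall i, measurable_fun setT (F i)) ->
  measurable_fun setT (fun w => \big[Num.max/0]_(i <- s) F i w).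
Proof.
move=> mF; elim: s => [|i s IHs].
  by under eq_fun do rewrite big_nil; exact: measurable_cst.
by under eq_fun do rewrite big_cons; exact: measurable_maxr.
Qed.

Lemma measurable_sublevel f t :
  measurable_fun setT f -> measurable [set w | f w <= t].
Proof.
move=> mf; have := mf measurableT _ (measurable_itv `]-oo, t]).
by rewrite setTI; congr measurable; apply/seteqP; split => w /=; rewrite in_itv.
Qed.

End measurable_functions.

Section measurable_vectors.
Context {dO : measure_display} {Omega : measurableType dO} {R : realType}.

Lemma measurable_selfnorm (c : R) n d (Z : nat -> 'I_d -> Omega -> R) j :
  (forall i, measurable_fun setT (Z i j)) ->
  measurable_fun setT (selfnorm c n Z j).
Proof.
move=> mZ; apply: measurable_ratio.
  by apply: measurableT_comp; [exact: normr_measurable|exact: measurable_sum].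
apply: (measurableT_comp measurable_sqrt); apply: measurable_sum => i.
exact/measurable_funX.
Qed.

Lemma measurable_maxnorm d (F : 'I_d -> Omega -> R) :
  (forall j, measurable_fun setT (F j)) ->
  measurable_fun setT (fun w => maxnorm (fun j => F j w)).
Proof.
move=> mF; apply: measurable_bigmaxr => j.
by apply: measurableT_comp; [exact: normr_measurable|exact: mF].
Qed.

Lemma measurable_Ytrunc (P : probability Omega R) n d
    (X : nat -> 'I_d -> Omega -> R) i j :
  measurable_fun setT (X i j) -> measurable_fun setT (Ytrunc P n X i j).
Proof.
move=> mX; apply: measurable_funM; first exact: measurable_funM.
apply: measurable_fun_ifT; last 2 first; [exact: measurable_cst..|].
exact/measurable_fun_ler/measurable_cst/measurable_funX.
Qed.

Lemma measurable_rvec_preimage d (X : nat -> 'I_d -> Omega -> R) i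
    (C : set ('I_d -> R)) :
  (forall j, measurable_fun setT (X i j)) -> borel_Rd C ->
  measurable (rvec X i @^-1` C).
Proof.
move=> mX; move: C; apply: smallest_sub.
  split => [|C mC|F mF] /=; first by rewrite preimage_set0.
  - by rewrite setTD preimage_setC; exact: measurableC.
  - by rewrite preimage_bigcup; exact: bigcupT_measurable.
move=> _ [j [B [mB ->]]] /=.
by have := mX j measurableT B mB; rewrite setTI.
Qed.

Lemma borel_Rd_exists_coord d (B : 'I_d -> set R) :
  (forall j, measurable (B j)) -> borel_Rd [set x | exists j, B j (x j)].
Proof.
move=> mB.
have -> : [set x | exists j, B j (x j)] =
    \bigcup_k [set x | exists j : 'I_d, val j = k /\ B j (x j)].
  apply/seteqP; split => x /= [j].
    by move=> Bj; exists (val j) => //; exists j.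
  by move=> _ [i [_ Bi]]; exists i.
apply: sigma_algebra_bigcup => k; have [kd|dk] := ltnP k d.
  apply: sub_sigma_algebra; exists (Ordinal kd), (B (Ordinal kd)).
  split => //; apply/seteqP; split => x /= => [[j [jk Bj]]|Bx].
    by rewrite -(_ : j = Ordinal kd) //; exact: val_inj.
  by exists (Ordinal kd).
have -> : [set x | exists j : 'I_d, val j = k /\ B j (x j)] = set0.
  apply/seteqP; split => x // [j [jk _]].
  by move: (ltn_ord j); rewrite jk ltnNge dk.
exact: sigma_algebra0.
Qed.

End measurable_vectors.

Section measure_bounds.
Context {d : measure_display} {T : measurableType d} {R : realType}.
Local Open Scope ereal_scope.

Lemma abse_measureB_le (mu : {finite_measure set T -> \bar R}) (A B U : set T) :
  measurable A -> measurable B -> measurable U ->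
  (forall w, ~ U w -> A w <-> B w) ->
  `|mu A - mu B| <= mu U.
Proof.
move=> mA mB mU AB.
have le_mU (A' B' : set T) : measurable A' -> measurable B' ->
    (forall w, ~ U w -> A' w -> B' w) -> mu A' <= mu B' + mu U.
  move=> mA' mB' A'B'; apply: le_trans (measureU2 _ mB' mU).
  apply: le_measure; rewrite ?inE //; first exact: measurableU.
  by move=> w A'w; have [|] := pselect (U w); [right|left; exact: A'B'].
have := le_mU _ _ mA mB (fun w Uw => (AB w Uw).1).
have := le_mU _ _ mB mA (fun w Uw => (AB w Uw).2).
rewrite -(fineK (fin_num_measure mu _ mA)) -(fineK (fin_num_measure mu _ mB)).
rewrite -(fineK (fin_num_measure mu _ mU)) -EFinN -!EFinD abse_EFin.
by rewrite !lee_fin => h1 h2; rewrite ler_norml; apply/andP; split; lra.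
Qed.

Lemma measure_bigsetU_le_ident (mu : {content set T -> \bar R}) n (E : nat -> set T) :
  (forall i, measurable (E i)) -> (forall i, (i < n)%N -> mu (E i) = mu (E 0%N)) ->
  mu (\big[setU/set0]_(i < n) E i) <= n%:R%:E * mu (E 0%N).
Proof.
move=> mE muE.
have mU : measurable (\big[setU/set0]_(i < n) E i).
  by apply: bigsetU_measurable => i _; exact: mE.
apply: le_trans (@content_subadditive _ _ _ mu _ E n (fun i _ => mE i) mU _) _ => //.
rewrite (eq_bigr (fun=> mu (E 0%N))) => [|i _]; last exact: muE.
by rewrite sumr_const card_ord mule_natl.
Qed.

End measure_bounds.

Section outliers.
Context {R : realType}.

Definition outlier (a m r : R) : bool :=
  (m < r ^+ 2 / a ^+ 2) || ((a == 0) && (r != 0)).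

Lemma outlierP a m r :
  reflect (m < r ^+ 2 / a ^+ 2 \/ (a = 0 /\ r != 0)) (outlier a m r).
Proof.
by apply: (iffP orP) => [[->|/andP[/eqP -> ->]]|[->|[-> ->]]]; rewrite ?eqxx; auto.
Qed.

Lemma measurable_outlier a m : measurable [set r : R | outlier a m r].
Proof.
have mo : measurable_fun setT (outlier a m).
  apply: measurable_or.
    apply: measurable_fun_ltr; first exact: measurable_cst.
    exact/measurable_funM/measurable_cst/measurable_funX.
  apply: measurable_and; first exact: measurable_cst.
  exact/measurable_neg/measurable_fun_eqr/measurable_cst.
by have := mo measurableT [set true] I; rewrite setTI.
Qed.

End outliers.

Section self_normalized_sums.
Context {dO : measure_display} {Omega : measurableType dO} {R : realType}.

Lemma selfnorm_scale (c k : R) n d (Z Z' : nat -> 'I_d -> Omega -> R) j w :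
  0 < k -> (forall i, (i < n)%N -> Z' i j w = k * Z i j w) ->
  selfnorm c n Z' j w = selfnorm c n Z j w.
Proof.
move=> k_gt0 Z'E; rewrite /selfnorm.
have -> : \sum_(i < n) Z' i j w = k * \sum_(i < n) Z i j w.
  by rewrite mulr_sumr; apply: eq_bigr => i _; exact: Z'E.
have -> : \sum_(i < n) Z' i j w ^+ 2 = k ^+ 2 * \sum_(i < n) Z i j w ^+ 2.
  by rewrite mulr_sumr; apply: eq_bigr => i _; rewrite Z'E // exprMn.
rewrite normrM sqrtrM ?sqr_ge0 // sqrtr_sqr ger0_norm ?ltW // /Defs.ratio.
rewrite mulf_eq0 (gt_eqF k_gt0) /=; case: eqP => // _.
by rewrite -mulf_div divff ?mul1r // gt_eqF.
Qed.

(* When a_j = 0 an inlier coordinate vanishes, so any k works. *)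
Lemma Ytrunc_scale (P : probability Omega R) n d (X : nat -> 'I_d -> Omega -> R) j :
  (0 < n)%N -> exists2 k : R, 0 < k & forall i w,
    ~~ outlier (a_coef P n X j) n%:R (X i j w) -> Ytrunc P n X i j w = k * X i j w.
Proof.
move=> n_gt0; set a := a_coef P n X j.
have [a0|a_neq0] := eqVneq a 0.
  exists 1 => // i w; rewrite /outlier a0 eqxx /= negb_or => /andP[_ /negPn /eqP X0].
  by rewrite /Ytrunc X0 !(mul0r, mulr0).
have a_gt0 : 0 < a by rewrite lt0r a_neq0 sqrtr_ge0.
exists (a * Num.sqrt n%:R)^-1; first by rewrite invr_gt0 mulr_gt0 // sqrtr_gt0 ltr0n.
move=> i w; rewrite /outlier (negbTE a_neq0) orbF -leNgt.
rewrite ler_pdivrMr ?exprn_gt0 // mulrC => X_le.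
by rewrite /Ytrunc -/a X_le mulr1 mulrC.
Qed.

Lemma selfnorm_Ytrunc (P : probability Omega R) (c : R) n d
    (X : nat -> 'I_d -> Omega -> R) j w :
  (0 < n)%N -> (forall i, (i < n)%N -> ~~ outlier (a_coef P n X j) n%:R (X i j w)) ->
  selfnorm c n (Ytrunc P n X) j w = selfnorm c n X j w.
Proof.
move=> n_gt0 inlier; have [k k_gt0 YE] := Ytrunc_scale P X j n_gt0.
by apply: (selfnorm_scale c k_gt0) => i lt_in; exact/YE/inlier.
Qed.

End self_normalized_sums.

Theorem lemma2 (dO : measure_display) (Omega : measurableType dO) (R : realType)
  (P : probability Omega R) (n d : nat) (X : nat -> 'I_d -> Omega -> R) (c : R) :
  (1 <= n)%N -> (1 <= d)%N ->
  (forall i j, measurable_fun setT (X i j)) ->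
  iid_vectors P n X ->
  (forall j, P.-integrable setT (fun w => (X 0%N j w)%:E)) ->
  (forall j, (\int[P]_w (X 0%N j w)%:E = 0)%E) ->
  (forall j, (0 < P [set w | X 0%N j w != 0%R])%E) ->
  (ereal_sup [set `| P [set w | (maxnorm (fun j => selfnorm c n X j w) <= t)%R]
                   - P [set w | (maxnorm (fun j => selfnorm c n (Ytrunc P n X) j w) <= t)%R] |%E
              | t in [set: R]]
   <= n%:R%:E * P [set w | exists j : 'I_d,
                     (n%:R < X 0%N j w ^+ 2 / a_coef P n X j ^+ 2
                      \/ (a_coef P n X j = 0 /\ X 0%N j w != 0))%R])%E.
Proof.
move=> n_gt0 _ mX [_ ident] _ _ _.
pose C := [set x : 'I_d -> R | exists j, outlier (a_coef P n X j) n%:R (x j)].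
have bC : borel_Rd C := borel_Rd_exists_coord (fun j => measurable_outlier _ _).
pose E i := rvec X i @^-1` C.
have mE i : measurable (E i) := measurable_rvec_preimage (mX i) bC.
have -> : [set w | exists j : 'I_d, (n%:R < X 0%N j w ^+ 2 / a_coef P n X j ^+ 2
                      \/ (a_coef P n X j = 0 /\ X 0%N j w != 0))%R] = E 0%N.
  by apply/seteqP; split => w [j /outlierP]; exists j.
pose U := \big[setU/set0]_(i < n) E i.
have mU : measurable U by apply: bigsetU_measurable => i _; exact: mE.
apply: ge_ereal_sup => _ [t _ <-].
apply: le_trans (measure_bigsetU_le_ident (mu := P) mE (fun i lt_in => ident i lt_in C bC)).
apply: (abse_measureB_le P _ _ mU) => [||w notU].
- by apply/measurable_sublevel/measurable_maxnorm => j; exact: measurable_selfnorm.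
- apply/measurable_sublevel/measurable_maxnorm => j.
  by apply: measurable_selfnorm => i; exact: measurable_Ytrunc.
rewrite /mkset.
suff -> : (fun j => selfnorm c n (Ytrunc P n X) j w) = (fun j => selfnorm c n X j w).
  by [].
apply/funext => j; apply: selfnorm_Ytrunc => // i lt_in; apply/negP => out.
by apply: notU; rewrite /U -bigcup_mkord; exists i => //; exists j.
Qed.
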